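(* Let $\psi\in\Psi$ satisfy $\limsup_{t\to\infty}\frac{\psi(2t)}{\psi(t)}<2$. If $0\le x\in M_\psi$, then there exists a constant $c(x)\in\mathbb{N}$ such that $n_x\big(\frac{\psi(t)}{t}\big)\le c(x)t$ for every sufficiently large $t$.
   Context: $\Psi$ is the class of concave increasing functions $\psi$ on $[0,\infty)$ with $\psi(\infty)=\infty$, $\psi(t)=O(t)$ as $t\to0$, $\psi(t)=o(t)$ as $t\to\infty$. For bounded measurable $x$ on $(0,\infty)$, $n_x(\lambda)=m(\{s:|x(s)|>\lambda\})$ and $x^*$ is the nonincreasing right-continuous rearrangement of $|x|$. $M_\psi$ is the space of bounded measurable $x$ with $\sup_{t>0}\frac1{\psi(t)}\int_0^tx^*(s)ds<\infty$. *)

From HB Require Import structures.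
From mathcomp Require Import all_boot all_order all_algebra.
From mathcomp Require Import all_classical all_reals all_analysis.
Set Implicit Arguments. Unset Strict Implicit. Unset Printing Implicit Defensive.
Import Order.TTheory GRing.Theory Num.Theory.
Import numFieldNormedType.Exports.
Local Open Scope classical_set_scope.
Local Open Scope ring_scope.

(* Functions on (0,oo) are represented as functions R -> R; only their
   values on (0,oo) are used. *)

Definition in_Psi (R : realType) (psi : R -> R) : Prop :=
  (forall s t a : R, 0 <= s -> 0 <= t -> 0 <= a -> a <= 1 ->
     (1 - a) * psi s + a * psi t <= psi ((1 - a) * s + a * t)) /\
  (forall s t : R, 0 <= s -> s <= t -> psi s <= psi t) /\
  (psi x @[x --> +oo] --> +oo) /\
  (exists C : R, exists2 d : R, 0 < d &
     forall t : R, 0 < t -> t < d -> `|psi t| <= C * t) /\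
  (psi t / t @[t --> +oo] --> 0).

Definition distr_fun (R : realType) (x : R -> R) (lam : R) : \bar R :=
  (@lebesgue_measure R) [set s : R | 0 < s /\ lam < `|x s|].

Definition rearr (R : realType) (x : R -> R) (t : R) : R :=
  inf [set lam : R | 0 <= lam /\ (distr_fun x lam <= t%:E)%E].

Definition bdd_meas (R : realType) (x : R -> R) : Prop :=
  measurable_fun (`]0, +oo[%classic : set R) x /\
  exists M : R, forall s : R, 0 < s -> `|x s| <= M.

Definition in_Mpsi (R : realType) (psi : R -> R) (x : R -> R) : Prop :=
  bdd_meas x /\
  (ereal_sup [set ((psi t)^-1)%:E *
                  (\int[@lebesgue_measure R]_(s in (`]0%R, t[%classic : set R)) (rearr x s)%:E)
             | t in (`]0%R, +oo[%classic : set R)] < +oo)%E.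

From HB Require Import structures.
From mathcomp Require Import all_boot all_order all_algebra.
From mathcomp Require Import all_classical all_reals all_analysis.
From mathcomp Require Import measurable_realfun ring lra.
Import Order.TTheory GRing.Theory Num.Theory.
Import numFieldNormedType.Exports.
Local Open Scope classical_set_scope.
Local Open Scope ring_scope.

(* If [n_x(psi t / t) > m] then [x^* >= psi t / t] on [(0, m)], so
   [m psi t / t <= int_0^m x^* <= K psi m] with [K] the [M_psi] norm of [x].
   Iterating [psi (2 u) <= q psi u] (some [q < 2], for large [u]) with
   [m = 2^k t] gives [2^k psi t <= K q^k psi t], which fails once [k] is
   large since [q < 2]; hence [n_x(psi t / t) <= 2^k t]. *)

Section Rearrangement.
Variables (R : realType) (x : R -> R).
Hypothesis bx : bdd_meas x.

Lemma measurable_distr_set (lam : R) :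
  measurable [set s : R | 0 < s /\ lam < `|x s|].
Proof.
have mn : measurable_fun (`]0, +oo[%classic : set R) (fun s => `|x s|).
  exact: measurableT_comp (@normr_measurable R setT) bx.1.
suff -> : [set s : R | 0 < s /\ lam < `|x s|] =
    `]0, +oo[ `&` (fun s => `|x s|) @^-1` `]lam, +oo[.
  exact: mn (measurable_itv _) _ (measurable_itv _).
by apply/seteqP; split => s /=; rewrite !in_itv /= !andbT.
Qed.

Lemma distr_fun_nonincreasing (a b : R) :
  a <= b -> (distr_fun x b <= distr_fun x a)%E.
Proof.
move=> ab; apply: le_measure; rewrite ?inE; try exact: measurable_distr_set.
by move=> s [s0 bs]; split => //; apply: le_lt_trans bs.
Qed.

Lemma distr_fun_sup_norm : exists M : R, 0 <= M /\ distr_fun x M = 0%E.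
Proof.
have [M xM] := bx.2; exists M; split; first exact: le_trans (xM 1 ltr01).
rewrite /distr_fun (_ : [set _ | _] = set0) ?measure0 //.
by apply/seteqP; split => s //= [s0]; rewrite ltNge xM.
Qed.

Let rearr_set (s : R) :=
  [set lam : R | 0 <= lam /\ (distr_fun x lam <= s%:E)%E].

Lemma rearr_set_neq0 (s : R) : 0 <= s -> rearr_set s !=set0.
Proof.
move=> s0; have [M [M0 xM]] := distr_fun_sup_norm.
by exists M; rewrite /rearr_set /= xM lee_fin.
Qed.

Lemma rearr_nonincreasing (s t : R) : 0 <= s -> s <= t -> rearr x t <= rearr x s.
Proof.
move=> s0 st; apply: lb_le_inf; first exact: rearr_set_neq0.
move=> l [l0 xl]; apply: ge_inf; first by exists 0 => ? [].
by split => //; apply: le_trans xl _; rewrite lee_fin.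
Qed.

Lemma measurable_rearr (D : set R) : measurable D ->
  D `<=` `]0, +oo[%classic -> measurable_fun D (EFin \o rearr x).
Proof.
move=> mD D0; apply/measurable_EFinP.
apply: (@eq_measurable_fun _ _ _ _ D (fun s => rearr x (Num.max s 0))).
  by move=> s /[!inE] /D0 /=; rewrite in_itv /= andbT => /ltW s0; rewrite max_l.
apply: nonincreasing_measurable => // a b ab; apply: rearr_nonincreasing.
  by rewrite le_max lexx orbT.
exact: le_max2.
Qed.

Lemma rearr_ge_of_distr_fun_gt (lam m s : R) :
  (m%:E < distr_fun x lam)%E -> 0 < s -> s < m -> lam <= rearr x s.
Proof.
move=> xm s0 sm; apply: lb_le_inf; first exact: rearr_set_neq0 (ltW s0).
move=> l [_ xl]; rewrite leNgt; apply/negP => ll.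
have := lt_le_trans xm (le_trans (distr_fun_nonincreasing _ _ (ltW ll)) xl).
by rewrite lte_fin ltNge (ltW sm).
Qed.

Lemma integral_rearr_ge_of_distr_fun_gt (lam m : R) :
  0 <= lam -> 0 < m -> (m%:E < distr_fun x lam)%E ->
  ((lam * m)%:E <=
    \int[@lebesgue_measure R]_(s in `]0%R, m[%classic) (rearr x s)%:E)%E.
Proof.
move=> lam0 m0 xm.
apply: (@le_trans _ _ (\int[@lebesgue_measure R]_(s in `]0%R, m[%classic) lam%:E)%E).
  rewrite integral_cst //= lebesgue_measure_itv /= lte_fin m0.
  by rewrite oppr0 addr0 -EFinM.
apply: ge0_le_integral => //.
- by apply: measurable_rearr => // s /=; rewrite !in_itv /= => /andP[->].
- move=> s /=; rewrite in_itv /= => /andP[s0 sm].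
  by rewrite lee_fin (rearr_ge_of_distr_fun_gt _ _ _ xm).
Qed.

End Rearrangement.

Lemma Mpsi_integral_rearr_bounded {R : realType} {psi x : R -> R} :
  in_Mpsi psi x -> exists K : R, forall u : R, 0 < u ->
  (((psi u)^-1)%:E *
    \int[@lebesgue_measure R]_(s in `]0%R, u[%classic) (rearr x s)%:E <= K%:E)%E.
Proof.
move=> [_]; set S := [set _ | _ in _] => Sfin.
have Sub u : 0 < u -> (((psi u)^-1)%:E *
    \int[@lebesgue_measure R]_(s in `]0%R, u[%classic) (rearr x s)%:E <= ereal_sup S)%E.
  by move=> u0; apply: ereal_sup_ubound; exists u; rewrite //= in_itv /= u0.
move: Sfin Sub; case: (ereal_sup S) => [r _ Sub| // |_ Sub]; first by exists r.
by exists 0 => u u0; apply: le_trans (Sub u u0) (leNye _).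
Qed.

Lemma exists_mulr_expr_lt {R : realType} {q p : R} (K : R) :
  0 <= q -> q < p -> exists k : nat, K * q ^+ k < p ^+ k.
Proof.
move=> q0 qp; have p0 : 0 < p by apply: le_lt_trans qp.
have qp0 : 0 <= q / p by rewrite divr_ge0 // ltW.
have qp1 : `|q / p| < 1 by rewrite ger0_norm // ltr_pdivrMr // mul1r.
have K1 : 0 < `|K| + 1 by rewrite ltr_wpDl.
have iK1 : 0 < (`|K| + 1)^-1 by rewrite invr_gt0.
have [N _ qpN] := (cvgrPdist_lt _ _).1 (cvg_expr qp1) _ iK1.
exists N; move: (qpN N (leqnn N)).
rewrite sub0r normrN ger0_norm ?exprn_ge0 // expr_div_n.
rewrite ltr_pdivrMr ?exprn_gt0 // mulrC ltr_pdivlMr // => qNK.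
have := ler_norm K; have := exprn_ge0 N q0; nra.
Qed.

Lemma Psi_near_pinfty_gt0 {R : realType} {psi : R -> R} :
  in_Psi psi -> \forall t \near +oo, 0 < psi t.
Proof.
move=> [_ [_ [psi_oo _]]].
by apply: filterS ((cvgryPge _).1 psi_oo 1) => t; apply: lt_le_trans.
Qed.

Lemma eventually_doubling_le {R : realType} {psi : R -> R} : in_Psi psi ->
  (limf_esup (fun t : R => (psi (2 * t) / psi t)%:E) (@pinfty_nbhs R) < 2%:E)%E ->
  exists2 q : R, 0 <= q < 2 & \forall t \near +oo, psi (2 * t) <= q * psi t.
Proof.
move=> /Psi_near_pinfty_gt0 psi_gt0 /ereal_inf_lt [_ [V FV <-]].
case E : (ereal_sup _) => [q| // |] q2.
- have Vq t : V t -> psi (2 * t) / psi t <= q.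
    by move=> Vt; rewrite -lee_fin -E; apply: ereal_sup_ubound; exists t.
  exists (Num.max q 0); first by rewrite le_max lexx orbT gt_max -lte_fin q2 ltr0n.
  near=> t; have psi_t : 0 < psi t by near: t.
  rewrite -ler_pdivrMr // (le_trans (Vq t _)) ?le_max ?lexx //.
  by near: t; exact: FV.
- exists 0; first by rewrite lexx ltr0n.
  near=> t; have : ((psi (2 * t) / psi t)%:E <= -oo)%E.
    by rewrite -E; apply: ereal_sup_ubound; exists t => //; near: t; exact: FV.
  by rewrite leeNy_eq.
Unshelve. all: end_near.
Qed.

Lemma near_pinfty_doubling_iter {R : realType} {f : R -> R} {q : R} : 0 <= q ->
  (\forall t \near +oo, f (2 * t) <= q * f t) ->
  forall k : nat, \forall t \near +oo, f (2 ^+ k * t) <= q ^+ k * f t.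
Proof.
move=> q0 [T [_ fT]] k; exists (Num.max T 0); split; first exact: num_real.
move=> t; rewrite gt_max => /andP[Tt t0].
elim: k => [|k IH]; first by rewrite !expr0 !mul1r.
have t_le : t <= 2 ^+ k * t.
  by rewrite ler_peMl ?(ltW t0) //; apply: exprn_ege1; rewrite ler1n.
rewrite !exprS -!mulrA; apply: le_trans (fT _ (lt_le_trans Tt t_le)) _.
exact: ler_wpM2l.
Qed.

Lemma distr_fun_le_of_growth {R : realType} (psi x : R -> R) (K P Q t : R) :
  bdd_meas x ->
  (forall u : R, 0 < u -> (((psi u)^-1)%:E *
    \int[@lebesgue_measure R]_(s in `]0%R, u[%classic) (rearr x s)%:E <= K%:E)%E) ->
  0 < t -> 0 < P -> 0 < psi t -> 0 < psi (P * t) ->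
  psi (P * t) <= Q * psi t -> K * Q < P ->
  (distr_fun x (psi t / t) <= (P * t)%:E)%E.
Proof.
move=> bx xK t0 P0 psi_t psi_Pt psi_growth KQP; rewrite leNgt; apply/negP => xPt.
have Pt0 : 0 < P * t by rewrite mulr_gt0.
have : (((psi (P * t))^-1 * (psi t / t * (P * t)))%:E <= K%:E)%E.
  apply: le_trans (xK _ Pt0); rewrite EFinM; apply: lee_wpmul2l.
    by rewrite lee_fin invr_ge0 ltW.
  by apply: integral_rearr_ge_of_distr_fun_gt; rewrite ?divr_ge0 ?ltW.
have -> : psi t / t * (P * t) = P * psi t by field; rewrite gt_eqF.
rewrite lee_fin ler_pdivrMl // => PK.
have K0 : 0 <= K by have := mulr_gt0 P0 psi_t; nra.
have : P * psi t <= K * Q * psi t.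
  by rewrite -mulrA (le_trans PK) // mulrC ler_wpM2l.
by rewrite ler_pM2r // leNgt KQP.
Qed.

Theorem lemma3p1 (R : realType) (psi : R -> R) (x : R -> R) :
  in_Psi psi ->
  (limf_esup (fun t : R => (psi (2 * t) / psi t)%:E) (@pinfty_nbhs R) < 2%:E)%E ->
  (forall s : R, 0 < s -> 0 <= x s) ->
  in_Mpsi psi x ->
  exists c : nat, \forall t \near +oo,
    (distr_fun x (psi t / t) <= (c%:R * t)%:E)%E.
Proof.
move=> psiP psi_doubling _ xM.
have [K xK] := Mpsi_integral_rearr_bounded xM.
have psi_gt0 := Psi_near_pinfty_gt0 psiP.
have [q /andP[q0 q2] psi_q] := eventually_doubling_le psiP psi_doubling.
have [k Kqk] := exists_mulr_expr_lt K q0 q2.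
have psi_qk := near_pinfty_doubling_iter q0 psi_q k.
have P1 : 1 <= (2 : R) ^+ k by apply: exprn_ege1; rewrite ler1n.
exists (2 ^ k)%N; rewrite natrX; near=> t.
have t0 : 0 < t by near: t; exact: nbhs_pinfty_gt.
have psi_t : 0 < psi t by near: t.
have psi_Pt : 0 < psi (2 ^+ k * t).
  by apply: lt_le_trans psi_t (psiP.2.1 _ _ (ltW t0) _); rewrite ler_peMl ?(ltW t0).
apply: (@distr_fun_le_of_growth _ psi x K (2 ^+ k) (q ^+ k) t xM.1 xK) => //.
by near: t.
Unshelve. all: end_near.
Qed.
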